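(* Let $Q=(q_n)_{n\ge1}$ be a basic sequence that is infinite in limit, and let $F_1,F_2$ be $Q$-special sequences. Then $|x_{F_1}-x_{F_2}|\le d(F_1,F_2)$.
   Context: A basic sequence is a sequence $Q=(q_n)_{n\ge1}$ of integers with $q_n\ge 2$; it is infinite in limit if $q_n\to\infty$. $\mathbb{N}$ denotes the positive integers. For each positive integer $j$ let $\nu_j=\min\{N : q_m\ge 2j^2 \text{ for all } m\ge N\}$. Define $l_1=\max(\nu_2-1,1)$ and, recursively for $i\ge 2$, $l_i=\max\big(\min\{k\in\mathbb{N} : l_1+2l_2+\cdots+(i-1)l_{i-1}+ik\ge \nu_{i+1}-1\},1\big)$. Put $L_i=\sum_{j=1}^i jl_j$ (with $L_0=0$). Let $S_Q=\{(a,b,c)\in\mathbb{N}^3 : b\le l_a,\ c\le a\}$ and $\phi_Q(a,b,c)=L_{a-1}+(b-1)a+c$; $\phi_Q$ is a bijection $S_Q\to\mathbb{N}$. A $Q$-special sequence is a family of integers $F=(F_{(a,b,c)})_{(a,b,c)\in S_Q}$ with $F_{(a,b,1)}=0$ for all $(a,b,1)\in S_Q$ and $\frac{F_{(a,b,c)}}{q_{\phi_Q(a,b,c)}}\in\left[\frac{c-1}{a}-\frac{1}{2a^2},\frac{c-1}{a}+\frac{1}{2a^2}\right]$ for $(a,b,c)\in S_Q$ with $c>1$. Let $\Gamma_Q$ be the set of $Q$-special sequences. For $F\in\Gamma_Q$ put $E_{F,n}=F_{\phi_Q^{-1}(n)}$ and $x_F=\sum_{n=1}^\infty \frac{E_{F,n}}{q_1q_2\cdots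 q_n}$. For $F_1\ne F_2$ in $\Gamma_Q$ let $\zeta_{F_1,F_2}=\min\{n : E_{F_1,n}\ne E_{F_2,n}\}$ and define $d(F_1,F_2)=\frac{1}{q_1q_2\cdots q_{\zeta_{F_1,F_2}-1}}$ (empty product equal to $1$); set $d(F,F)=0$. *)

From Stdlib Require Import Reals ZArith Arith Lia ClassicalEpsilon.
From Coquelicot Require Import Coquelicot.
Open Scope R_scope.

(* Q = (q_n)_{n>=1} is a function nat -> nat; the value q 0 is irrelevant. *)
Definition basic_seq (q : nat -> nat) : Prop :=
  forall n, (1 <= n)%nat -> (2 <= q n)%nat.

Definition infinite_in_limit (q : nat -> nat) : Prop :=
  forall M : nat, exists N : nat, forall n, (N <= n)%nat -> (M <= q n)%nat.

(* the least natural number satisfying P (classical; junk if none exists) *)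
Definition natmin (P : nat -> Prop) : nat :=
  epsilon (inhabits 0%nat) (fun n => P n /\ forall m, P m -> (n <= m)%nat).

Definition nu (q : nat -> nat) (j : nat) : nat :=
  natmin (fun N => (1 <= N)%nat /\ forall m, (N <= m)%nat -> (2 * j * j <= q m)%nat).

(* lL q i = (l_i, L_i), with lL q 0 = (junk, L_0 = 0) *)
Fixpoint lL (q : nat -> nat) (i : nat) : nat * nat :=
  match i with
  | O => (0%nat, 0%nat)
  | S i' =>
      let Lp := snd (lL q i') in
      let a := S i' in
      let l := if Nat.eqb i' 0 then Nat.max (nu q 2 - 1) 1
               else Nat.max (natmin (fun k => (1 <= k)%nat /\
                                 (nu q (a + 1) - 1 <= Lp + a * k)%nat)) 1 in
      (l, (Lp + a * l)%nat)
  end.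

Definition l_ (q : nat -> nat) (i : nat) : nat := fst (lL q i).
Definition L_ (q : nat -> nat) (i : nat) : nat := snd (lL q i).

Definition inS (q : nat -> nat) (t : nat * nat * nat) : Prop :=
  let '(a, b, c) := t in
  (1 <= a)%nat /\ (1 <= b)%nat /\ (1 <= c)%nat /\ (b <= l_ q a)%nat /\ (c <= a)%nat.

Definition phi (q : nat -> nat) (t : nat * nat * nat) : nat :=
  let '(a, b, c) := t in (L_ q (a - 1) + (b - 1) * a + c)%nat.

Definition phi_inv (q : nat -> nat) (n : nat) : nat * nat * nat :=
  epsilon (inhabits (1%nat, 1%nat, 1%nat)) (fun t => inS q t /\ phi q t = n).

(* Q-special sequences: families indexed by S_Q (values outside S_Q irrelevant) *)
Definition special (q : nat -> nat) (F : nat * nat * nat -> Z) : Prop :=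
  forall a b c, inS q (a, b, c) ->
    (c = 1%nat -> F (a, b, c) = 0%Z) /\
    ((1 < c)%nat ->
       let r := IZR (F (a, b, c)) / INR (q (phi q (a, b, c))) in
       let m := (INR c - 1) / INR a in
       m - 1 / (2 * INR a ^ 2) <= r /\ r <= m + 1 / (2 * INR a ^ 2)).

Definition E (q : nat -> nat) (F : nat * nat * nat -> Z) (n : nat) : Z :=
  F (phi_inv q n).

Fixpoint prodq (q : nat -> nat) (n : nat) : R :=
  match n with
  | O => 1
  | S m => prodq q m * INR (q (S m))
  end.

Definition xF (q : nat -> nat) (F : nat * nat * nat -> Z) : R :=
  Series (fun n => IZR (E q F (S n)) / prodq q (S n)).

Definition dQ (q : nat -> nat) (F1 F2 : nat * nat * nat -> Z) : R :=
  match excluded_middle_informative (forall t, inS q t -> F1 t = F2 t) with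
  | left _ => 0
  | right _ =>
      let zeta := natmin (fun n => (1 <= n)%nat /\ E q F1 n <> E q F2 n) in
      1 / prodq q (zeta - 1)
  end.

(* Both entries E_{F_1,n}, E_{F_2,n} lie in q_n [m - e, m + e] for the same centre
   m = (c-1)/a in [0, 1] and a radius e = 1/(2a^2) <= 1/8 (m = e = 0 when c = 1),
   so |E_{F_1,n} - E_{F_2,n}| <= q_n/4.  The terms of x_{F_1} - x_{F_2} vanish before
   zeta, and since q_n >= 2 the remaining bounds 1/(4 q_1...q_{n-1}) at least halve
   at each step, so they sum to at most 1/(2 q_1...q_{zeta-1}). *)
From Stdlib Require Import Reals ZArith Lia Lra Wf_nat ClassicalEpsilon.
From Coquelicot Require Import Coquelicot.
Open Scope R_scope.

Lemma natmin_spec (P : nat -> Prop) : (exists n, P n) ->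
  P (natmin P) /\ forall m, P m -> (natmin P <= m)%nat.
Proof.
  intros HP. unfold natmin. apply epsilon_spec.
  destruct (dec_inh_nat_subset_has_unique_least_element P (fun n => classic (P n)) HP)
    as [n [Hn _]].
  now exists n.
Qed.

Lemma l_S_ge1 q i : (1 <= l_ q (S i))%nat.
Proof. unfold l_; simpl. destruct (Nat.eqb i 0); simpl; lia. Qed.

Lemma L_S q i : L_ q (S i) = (L_ q i + S i * l_ q (S i))%nat.
Proof. reflexivity. Qed.

Lemma L_ge_id q a : (a <= L_ q a)%nat.
Proof. induction a as [|a IH]; [cbn; lia|]. rewrite L_S. pose proof (l_S_ge1 q a). nia. Qed.

Lemma L_block q n : (1 <= n)%nat -> exists a, (L_ q a < n <= L_ q (S a))%nat.
Proof.
  intros Hn.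
  enough (Hblock : forall A, (n <= L_ q A)%nat -> exists a, (L_ q a < n <= L_ q (S a))%nat)
    by exact (Hblock n (L_ge_id q n)).
  induction A as [|A IH]; intros HA; [cbn in HA; lia|].
  destruct (le_lt_dec n (L_ q A)) as [Hle|Hlt]; [now apply IH|].
  now exists A.
Qed.

Lemma phi_surj q n : (1 <= n)%nat -> exists t, inS q t /\ phi q t = n.
Proof.
  intros Hn. destruct (L_block q n Hn) as [a [Hlo Hhi]].
  rewrite L_S in Hhi. pose proof (l_S_ge1 q a).
  set (x := (n - L_ q a - 1)%nat).
  pose proof (Nat.div_mod x (S a) ltac:(lia)).
  pose proof (Nat.mod_upper_bound x (S a) ltac:(lia)).
  assert (x / S a < l_ q (S a))%nat by (apply Nat.Div0.div_lt_upper_bound; unfold x; lia).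
  exists (S a, S (x / S a), S (x mod S a)). split.
  - unfold inS. repeat split; lia.
  - cbn [phi]. replace (S a - 1)%nat with a by lia.
    replace (S (x / S a) - 1)%nat with (x / S a)%nat by lia. unfold x in *. nia.
Qed.

Lemma phi_inv_spec q n : (1 <= n)%nat -> inS q (phi_inv q n) /\ phi q (phi_inv q n) = n.
Proof. intros Hn. unfold phi_inv. apply epsilon_spec. now apply phi_surj. Qed.

Lemma special_ratio_window q t : inS q t ->
  exists m e, 0 <= m <= 1 /\ 0 <= e <= 1/8 /\
    forall F, special q F -> m - e <= IZR (F t) / INR (q (phi q t)) <= m + e.
Proof.
  destruct t as [[a b] c]. intros Ht. pose proof Ht as (Ha & _ & Hc & _ & Hca).
  destruct (Nat.eq_dec c 1) as [->|Hc1].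
  - exists 0, 0. split; [lra|split; [lra|]].
    intros F HF. rewrite (proj1 (HF a b 1%nat Ht) eq_refl). unfold Rdiv. lra.
  - assert (HC : 2 <= INR c <= INR a).
    { split; [change 2 with (INR 2)|]; apply le_INR; lia. }
    exists ((INR c - 1) / INR a), (1 / (2 * INR a ^ 2)).
    assert (Hm : (INR c - 1) / INR a * INR a = INR c - 1) by (field; lra).
    assert (He : 1 / (2 * INR a ^ 2) * (2 * INR a ^ 2) = 1) by (field; lra).
    assert (0 < 1 / (2 * INR a ^ 2)) by (apply Rdiv_lt_0_compat; nra).
    split; [split|split; [split|]].
    + apply Rdiv_le_0_compat; lra.
    + apply (Rmult_le_reg_r (INR a)); [lra|]. rewrite Hm. lra.
    + lra.
    + apply (Rmult_le_reg_r (2 * INR a ^ 2)); [nra|]. rewrite He. nra.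
    + intros F HF. exact (proj2 (HF a b c Ht) ltac:(lia)).
Qed.

Lemma Rabs_le_of_ratio_window (X Q m e : R) : 0 < Q ->
  m - e <= X / Q <= m + e -> Rabs X <= (Rabs m + e) * Q.
Proof.
  intros HQ Hw. replace X with (X / Q * Q) by (field; lra).
  rewrite Rabs_mult, (Rabs_pos_eq Q) by lra.
  apply Rmult_le_compat_r; [lra|]. apply Rabs_le. split_Rabs; lra.
Qed.

Lemma Rabs_sub_le_of_ratio_window (X Y Q m e : R) : 0 < Q ->
  m - e <= X / Q <= m + e -> m - e <= Y / Q <= m + e -> Rabs (X - Y) <= 2 * e * Q.
Proof.
  intros HQ HX HY. replace (X - Y) with ((X / Q - Y / Q) * Q) by (field; lra).
  rewrite Rabs_mult, (Rabs_pos_eq Q) by lra.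
  apply Rmult_le_compat_r; [lra|]. apply Rabs_le. lra.
Qed.

Lemma q_ge2 q n : basic_seq q -> (1 <= n)%nat -> 2 <= INR (q n).
Proof. intros Hb Hn. change 2 with (INR 2). apply le_INR, Hb, Hn. Qed.

Lemma phi_ge1 q t : inS q t -> (1 <= phi q t)%nat.
Proof. destruct t as [[a b] c]. intros (_ & _ & Hc & _). cbn [phi]. nia. Qed.

Lemma special_entry_bound q F t : basic_seq q -> special q F -> inS q t ->
  Rabs (IZR (F t)) <= 2 * INR (q (phi q t)).
Proof.
  intros Hb HF Ht.
  assert (HQ : 0 < INR (q (phi q t))) by (pose proof (q_ge2 q _ Hb (phi_ge1 q t Ht)); lra).
  destruct (special_ratio_window q t Ht) as (m & e & Hm & He & Hw).
  pose proof (Rabs_le_of_ratio_window _ _ _ _ HQ (Hw F HF)) as Hbound.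
  rewrite (Rabs_pos_eq m) in Hbound by lra. nra.
Qed.

Lemma special_entries_close q F1 F2 t : basic_seq q -> special q F1 -> special q F2 ->
  inS q t -> Rabs (IZR (F1 t) - IZR (F2 t)) <= INR (q (phi q t)) / 4.
Proof.
  intros Hb HF1 HF2 Ht.
  assert (HQ : 0 < INR (q (phi q t))) by (pose proof (q_ge2 q _ Hb (phi_ge1 q t Ht)); lra).
  destruct (special_ratio_window q t Ht) as (m & e & _ & He & Hw).
  pose proof (Rabs_sub_le_of_ratio_window _ _ _ _ _ HQ (Hw F1 HF1) (Hw F2 HF2)). nra.
Qed.

Lemma prodq_pos q n : basic_seq q -> 0 < prodq q n.
Proof.
  intros Hb. induction n as [|n IH]; cbn [prodq]; [lra|].
  pose proof (q_ge2 q (S n) Hb ltac:(lia)). nra.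
Qed.

Lemma div_prodq_S_le q c n : basic_seq q -> 0 <= c ->
  c / prodq q (S n) <= c / prodq q n / 2.
Proof.
  intros Hb Hc. pose proof (prodq_pos q n Hb). pose proof (q_ge2 q (S n) Hb ltac:(lia)).
  cbn [prodq]. replace (c / (prodq q n * INR (q (S n)))) with (c / prodq q n * / INR (q (S n)))
    by (field; lra).
  apply Rmult_le_compat_l; [apply Rdiv_le_0_compat; lra|].
  apply Rinv_le_contravar; lra.
Qed.

Section HalvingBound.

Variables (d w : nat -> R).
Hypothesis w_nonneg : forall n, 0 <= w n.
Hypothesis w_halves : forall n, w (S n) <= w n / 2.
Hypothesis d_le_w : forall n, Rabs (d n) <= w n.

Lemma halving_le_geom n : w n <= w 0%nat * (1/2) ^ n.
Proof.
  induction n as [|n IH]; cbn [pow]; [lra|].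
  pose proof (w_halves n). lra.
Qed.

Lemma ex_series_Rabs_of_halving : ex_series (fun n => Rabs (d n)).
Proof.
  apply (@ex_series_le R_AbsRing R_CompleteNormedModule _ (fun n => scal (w 0%nat) ((1/2) ^ n))).
  - intros n. change (norm (Rabs (d n))) with (Rabs (Rabs (d n))).
    rewrite Rabs_Rabsolu. pose proof (halving_le_geom n). pose proof (d_le_w n).
    change (scal (w 0%nat) ((1/2) ^ n)) with (w 0%nat * (1/2) ^ n). lra.
  - apply (ex_series_scal_l (w 0%nat) (fun n => (1/2) ^ n)), ex_series_geom.
    rewrite Rabs_pos_eq; lra.
Qed.

Lemma ex_series_of_halving : ex_series d.
Proof. apply ex_series_Rabs, ex_series_Rabs_of_halving. Qed.

Variable k : nat.
Hypothesis d_vanish : forall n, (n < k)%nat -> d n = 0.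

Lemma sum_Rabs_le_of_halving N :
  sum_f_R0 (fun n => Rabs (d n)) N + 2 * w (Nat.max k (S N)) <= 2 * w k.
Proof.
  induction N as [|N IH]; cbn [sum_f_R0].
  - destruct k as [|k']; cbn [Nat.max].
    + pose proof (d_le_w 0%nat). pose proof (w_halves 0%nat). lra.
    + rewrite d_vanish, Rabs_R0 by lia. replace (Nat.max k' 0) with k' by lia. lra.
  - destruct (le_lt_dec k (S N)) as [Hk|Hk].
    + rewrite Nat.max_r in IH |- * by lia.
      pose proof (d_le_w (S N)). pose proof (w_halves (S N)). lra.
    + rewrite Nat.max_l in IH |- * by lia.
      rewrite d_vanish, Rabs_R0 by exact Hk. lra.
Qed.

Lemma Rabs_Series_le_of_halving : Rabs (Series d) <= 2 * w k.
Proof.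
  eapply Rle_trans; [apply Series_Rabs, ex_series_Rabs_of_halving|].
  assert (Hlim : Rbar_le (Series (fun n => Rabs (d n))) (2 * w k)).
  { apply (is_lim_seq_le (sum_n (fun n => Rabs (d n))) (fun _ => 2 * w k)).
    - intros N. rewrite sum_n_Reals.
      pose proof (sum_Rabs_le_of_halving N). pose proof (w_nonneg (Nat.max k (S N))). lra.
    - apply Series_correct, ex_series_Rabs_of_halving.
    - apply is_lim_seq_const. }
  exact Hlim.
Qed.

End HalvingBound.

Definition xF_term (q : nat -> nat) (F : nat * nat * nat -> Z) (n : nat) : R :=
  IZR (E q F (S n)) / prodq q (S n).

Lemma Rabs_div_le (X B D : R) : 0 < D -> Rabs X <= B -> Rabs (X / D) <= B / D.
Proof.
  intros HD HX. rewrite Rabs_div, (Rabs_pos_eq D) by lra.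
  apply Rmult_le_compat_r; [left; apply Rinv_0_lt_compat|]; lra.
Qed.

Lemma xF_term_bound q F n : basic_seq q -> special q F ->
  Rabs (xF_term q F n) <= 2 / prodq q n.
Proof.
  intros Hb HF. destruct (phi_inv_spec q (S n) ltac:(lia)) as [Ht Hphi].
  pose proof (special_entry_bound q F _ Hb HF Ht) as Hent. rewrite Hphi in Hent.
  pose proof (prodq_pos q n Hb). pose proof (q_ge2 q (S n) Hb ltac:(lia)).
  unfold xF_term, E. cbn [prodq].
  replace (2 / prodq q n) with (2 * INR (q (S n)) / (prodq q n * INR (q (S n))))
    by (field; lra).
  apply Rabs_div_le; [nra | exact Hent].
Qed.

Lemma xF_term_sub_bound q F1 F2 n : basic_seq q -> special q F1 -> special q F2 ->
  Rabs (xF_term q F1 n - xF_term q F2 n) <= (1/4) / prodq q n.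
Proof.
  intros Hb HF1 HF2. destruct (phi_inv_spec q (S n) ltac:(lia)) as [Ht Hphi].
  pose proof (special_entries_close q F1 F2 _ Hb HF1 HF2 Ht) as Hent. rewrite Hphi in Hent.
  pose proof (prodq_pos q n Hb). pose proof (q_ge2 q (S n) Hb ltac:(lia)).
  unfold xF_term, E. cbn [prodq]. unfold Rminus at 1. rewrite <- Ropp_div, <- Rdiv_plus_distr.
  replace (1 / 4 / prodq q n) with (INR (q (S n)) / 4 / (prodq q n * INR (q (S n))))
    by (field; lra).
  apply Rabs_div_le; [nra | exact Hent].
Qed.

Lemma ex_series_xF_term q F : basic_seq q -> special q F -> ex_series (xF_term q F).
Proof.
  intros Hb HF. apply (ex_series_of_halving _ (fun n => 2 / prodq q n)).
  - intros n. apply div_prodq_S_le; [exact Hb | lra].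
  - intros n. now apply xF_term_bound.
Qed.

Lemma dQ_cases q F1 F2 : basic_seq q ->
  (dQ q F1 F2 = 0 /\ forall n, E q F1 (S n) = E q F2 (S n)) \/
  (exists k, dQ q F1 F2 = 1 / prodq q k /\
     forall n, (n < k)%nat -> E q F1 (S n) = E q F2 (S n)).
Proof.
  intros Hb. unfold dQ. destruct excluded_middle_informative as [Hall|_].
  - left. split; [reflexivity|]. intros n. apply Hall, phi_inv_spec. lia.
  - right. set (P := fun n => (1 <= n)%nat /\ E q F1 n <> E q F2 n).
    exists (natmin P - 1)%nat. split; [reflexivity|]. intros n Hn.
    destruct (Z.eq_dec (E q F1 (S n)) (E q F2 (S n))) as [Heq|Hne]; [exact Heq|].
    assert (HP : P (S n)) by (split; [lia | exact Hne]).
    pose proof (proj2 (natmin_spec P (ex_intro _ _ HP)) _ HP). lia.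
Qed.

Theorem mainTheorem18 (q : nat -> nat) (Hbasic : basic_seq q)
  (Hinf : infinite_in_limit q) (F1 F2 : nat * nat * nat -> Z)
  (H1 : special q F1) (H2 : special q F2) :
  Rabs (xF q F1 - xF q F2) <= dQ q F1 F2.
Proof.
  destruct (dQ_cases q F1 F2 Hbasic) as [[-> Hagree] | [k [-> Hagree]]].
  - assert (Heq : xF q F1 = xF q F2).
    { apply Series_ext. intros n. now rewrite Hagree. }
    rewrite Heq, Rminus_diag_eq, Rabs_R0 by reflexivity. lra.
  - change (xF q F1 - xF q F2) with (Series (xF_term q F1) - Series (xF_term q F2)).
    rewrite <- Series_minus by now apply ex_series_xF_term.
    assert (Hhalf : 2 * (1/4 / prodq q k) <= 1 / prodq q k).
    { pose proof (Rinv_0_lt_compat _ (prodq_pos q k Hbasic)). unfold Rdiv. lra. }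
    eapply Rle_trans; [|exact Hhalf].
    apply (Rabs_Series_le_of_halving _ (fun n => (1/4) / prodq q n)).
    + intros n. apply Rdiv_le_0_compat; [lra | apply prodq_pos, Hbasic].
    + intros n. apply div_prodq_S_le; [exact Hbasic | lra].
    + intros n. now apply xF_term_sub_bound.
    + intros n Hn. unfold xF_term. rewrite Hagree by exact Hn. lra.
Qed.
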